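(* Let $\lambda$ be a partition of $n$ and let $\lambda(\cdot)$ denote Young's orthogonal representation of $S_n$ on the space with orthonormal basis $\{\ket{T}\}$ indexed by standard Young tableaux $T$ of shape $\lambda$. Let $A=\{a_1,\dots,a_k\}\subseteq\{1,\dots,n\}$ be a set of consecutive integers, let $S_A\le S_n$ be the symmetric group permuting the elements of $A$ (fixing all others), and let $\lambda(S_A)=\sum_{\pi\in S_A}\lambda(\pi)$. If $T$ is a standard Young tableau of shape $\lambda$ containing two elements of $A$ in the same column, then $\lambda(S_A)\ket{T}=0$.
   Context: A standard Young tableau (SYT) of shape $\lambda\vdash n$ is a filling of the Young diagram of $\lambda$ with $1,\dots,n$, each used once, strictly increasing along rows (left to right) and down columns. Young's orthogonal representation is determined by the action of adjacent transpositions $(k,k+1)$ on SYTs: if $k$ and $k+1$ lie in the same row of $T$, then $(k,k+1)\ket{T}=\ket{T}$; if they lie in the same column, $(k,k+1)\ket{T}=-\ket{T}$; otherwise $(k,k+1)\ket{T}=a\ket{T}+\sqrt{1-a^2}\,\ket{(k,k+1)T}$ and $(k,k+1)\ket{(k,k+1)T}=\sqrt{1-a^2}\,\ket{T}-a\ket{(k,k+1)T}$, where $(k,k+1)T$ is the SYT obtained from $T$ by swapping the entries $k$ and $k+1$, and $a$ is the reciprocal of the axial distance in $T$ between the box containing $k$ and the box containing $k+1$ (the signed number of steps: up steps plus right steps minus left steps minus down steps, from the box of $k$ to the box of $k+1$). *)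

From HB Require Import structures.
From mathcomp Require Import all_boot all_order all_algebra all_fingroup.
Set Implicit Arguments. Unset Strict Implicit. Unset Printing Implicit Defensive.
Import Order.TTheory GRing.Theory Num.Theory.

(* Entries 1..n of a tableau are encoded as the ordinals 0..n-1 of 'I_n
   (entry k+1 is the ordinal k).  A tableau is encoded by the position
   function: t i = (row, column) of the box containing entry i, rows and
   columns numbered from 0, rows going downward. *)
Definition tab (n : nat) := {ffun 'I_n -> 'I_n * 'I_n}.

Definition is_partition (n : nat) (la : seq nat) : bool :=
  [&& sorted geq la, all (fun p => 0 < p) la & sumn la == n].

Definition in_shape (n : nat) (la : seq nat) (b : 'I_n * 'I_n) : bool :=
  (b.1 < size la) && (b.2 < nth 0 la b.1).

(* standard Young tableau of shape la: a bijective filling of the diagram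
   (injective into the diagram, which has n = sumn la boxes), strictly
   increasing along rows and down columns *)
Definition is_syt (n : nat) (la : seq nat) (t : tab n) : bool :=
  [&& injectiveb t,
      [forall i, in_shape la (t i)],
      [forall i, forall j, (((t i).1 == (t j).1) && ((t i).2 < (t j).2)) ==> (i < j)]
    & [forall i, forall j, (((t i).2 == (t j).2) && ((t i).1 < (t j).1)) ==> (i < j)]].

Definition syt (n : nat) (la : seq nat) := {t : tab n | is_syt la t}.

Local Open Scope ring_scope.

(* Coefficient of |U> in (i,j)|T>, for j = i+1, in Young's orthogonal form. *)
Definition adj_coef (R : rcfType) (n : nat) (la : seq nat) (i j : 'I_n)
    (T U : syt n la) : R :=
  let t := val T in
  let u := val U in
  if (t i).1 == (t j).1 then (U == T)%:R
  else if (t i).2 == (t j).2 then - (U == T)%:R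
  else
    (* axial distance from the box of i to the box of j:
       right steps + up steps - left steps - down steps *)
    let d : int := ((t j).2%:Z - (t j).1%:Z) - ((t i).2%:Z - (t i).1%:Z) in
    let a : R := (d%:~R)^-1 in
    a * (U == T)%:R
    + Num.sqrt (1 - a ^+ 2) * (u == [ffun x => t (tperm i j x)])%:R.

(* rho p T U = coefficient of |U> in lambda(p)|T>.  rho is Young's orthogonal
   representation: a group homomorphism (mathcomp: (p * q) x = q (p x), so
   lambda(p*q) = lambda(q) lambda(p)) whose values on adjacent
   transpositions are given by the rule above. *)
Definition is_young_orthogonal_rep (R : rcfType) (n : nat) (la : seq nat)
    (rho : {perm 'I_n} -> syt n la -> syt n la -> R) : Prop :=
  [/\ forall T U, rho 1%g T U = (T == U)%:R,
      forall (p q : {perm 'I_n}) T U,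
        rho (p * q)%g T U = \sum_(W : syt n la) rho p T W * rho q W U
    & forall (i j : 'I_n), nat_of_ord j = i.+1 ->
        forall T U, rho (tperm i j) T U = adj_coef R i j T U].

Definition consecutive (n : nat) (A : {set 'I_n}) : Prop :=
  forall x y z : 'I_n, x \in A -> z \in A -> (x <= y)%N -> (y <= z)%N -> y \in A.

Definition sym_on (n : nat) (A : {set 'I_n}) : {set {perm 'I_n}} :=
  [set p : {perm 'I_n} | perm_on A p].

(* Write v(W) for the U-coefficient of lambda(S_A)|W>.  As S_A is a group,
   v(T) = sum_W <W|lambda(s)|T> v(W) for every s in S_A.  Induct on the row
   weight sum_i i * row(i).  If two entries x < y of A share a column of T,
   some adjacent pair k, k+1 between them (hence in A, A being consecutive) has
   k+1 in a lower row than k.  If k, k+1 share a column, s = (k,k+1) gives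
   v(T) = -v(T).  Otherwise k+1 lies strictly left of k, since the box in the
   row of k and the column of k+1 would have to hold an entry strictly between
   k and k+1; so the axial distance is negative and s gives
   v(T) = a v(T) + sqrt(1 - a^2) v(sT) with a < 0.  The tableau sT again has a
   column pair in A and a smaller row weight, so v(sT) = 0 by induction, and
   hence v(T) = 0. *)

From HB Require Import structures.
From mathcomp Require Import all_boot all_order all_algebra all_fingroup.
From mathcomp Require Import zify lra.
Import Order.TTheory GRing.Theory Num.Theory.

Set Implicit Arguments.
Unset Strict Implicit.
Unset Printing Implicit Defensive.

Lemma sum1_ord_ltn (n m : nat) : \sum_(i < n | i < m) 1 = minn n m.
Proof.
elim: n => [|n IHn]; first by rewrite big_ord0 min0n.
by rewrite big_mkcond big_ord_recr -big_mkcond /= IHn; case: ltnP; lia.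
Qed.

Lemma sum_nth_leq_sumn (s : seq nat) (m : nat) : \sum_(r < m) nth 0 s r <= sumn s.
Proof.
elim: s m => [|x s IHs] m; first by rewrite big1 // => r _; rewrite nth_nil.
by case: m => [|m]; rewrite ?big_ord0 // big_ord_recl leq_add2l.
Qed.

Lemma card_shape (n : nat) (la : seq nat) :
  #|[set b : 'I_n * 'I_n | in_shape la b]| <= sumn la.
Proof.
rewrite -sum1_card (eq_bigl (fun b : 'I_n * 'I_n => in_shape la b)) => [|b]; last by rewrite inE.
rewrite -(pair_big_dep (fun r : 'I_n => r < size la) (fun r (c : 'I_n) => c < nth 0 la r)
          (fun _ _ => 1)) /=.
apply: leq_trans (sum_nth_leq_sumn la n).
rewrite [X in _ <= X](bigID (fun r : 'I_n => r < size la)) /=; apply: leq_trans (leq_addr _ _).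
apply: leq_sum => r _.
by rewrite sum1_ord_ltn geq_minr.
Qed.

Section StandardTableau.

Variables (n : nat) (la : seq nat) (t : tab n).
Hypotheses (la_part : is_partition n la) (t_syt : is_syt la t).

Lemma syt_fills_shape (b : 'I_n * 'I_n) : in_shape la b -> exists i, t i = b.
Proof.
case/and3P: la_part => _ _ /eqP sum_la; case/and4P: t_syt => /injectiveP t_inj /forallP t_in _ _.
have im_t : [set t i | i in 'I_n] = [set b | in_shape la b].
  apply/eqP; rewrite eqEcard card_imset // card_ord.
  rewrite -[X in _ <= X]sum_la card_shape andbT.
  by apply/subsetP => _ /imsetP[i _ ->]; rewrite inE.
move=> b_in; have /imsetP[i _ ->] : b \in [set t i | i in 'I_n] by rewrite im_t inE.
by exists i.
Qed.

Lemma syt_succ_below_col (i j : 'I_n) : val j = i.+1 ->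
  (t i).1 < (t j).1 -> (t j).2 <= (t i).2.
Proof.
move=> ji lt_row; rewrite leqNgt; apply/negP => lt_col.
case/and4P: t_syt => _ /forallP t_in /forallP t_row /forallP t_col.
have /andP[ri_la _] := t_in i; have /andP[rj_la cj_la] := t_in j.
have la_rows : nth 0 la (t j).1 <= nth 0 la (t i).1.
  case/and3P: la_part => la_sorted _ _.
  by apply: (sorted_leq_nth (rev_trans leq_trans) leqnn) => //; apply: ltnW.
have [g tg] : exists g, t g = ((t i).1, (t j).2).
  by apply: syt_fills_shape; rewrite /in_shape /= ri_la (leq_trans cj_la).
have := t_row i => /forallP/(_ g); rewrite tg /= eqxx lt_col /= => lt_ig.
have := t_col g => /forallP/(_ j); rewrite tg /= eqxx lt_row /= => lt_gj.
by move: lt_ig lt_gj; rewrite ji; lia.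
Qed.

End StandardTableau.

Lemma exists_ascent (f : nat -> nat) (x y : nat) : x <= y -> f x < f y ->
  exists k, [/\ x <= k, k < y & f k < f k.+1].
Proof.
elim: y => [|y IHy]; first by rewrite leqn0 => /eqP->; rewrite ltnn.
rewrite leq_eqVlt ltnS => /predU1P[-> | le_xy]; first by rewrite ltnn.
case: (ltnP (f y) (f y.+1)) => [up | down lt_fxy]; first by exists y.
have [k [le_xk lt_ky up]] := IHy le_xy (leq_trans lt_fxy down).
by exists k; split=> //; apply: ltnW.
Qed.

Definition tab_perm (n : nat) (t : tab n) (s : {perm 'I_n}) : tab n := [ffun z => t (s z)].

Definition row_weight (n : nat) (t : tab n) : nat := \sum_(i : 'I_n) i * (t i).1.

Lemma row_weight_tperm (n : nat) (t : tab n) (k k' : 'I_n) : val k' = k.+1 ->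
  row_weight (tab_perm t (tperm k k')) + (t k').1 = row_weight t + (t k).1.
Proof.
move=> k'k; have kk' : k' != k by rewrite -val_eqE k'k neq_ltn ltnSn orbT.
rewrite /row_weight (reindex_inj (@perm_inj _ (tperm k k'))) /=.
under eq_bigr do rewrite ffunE tpermK.
rewrite (bigD1 k) // (bigD1 k') //= [in RHS](bigD1 k) // [in RHS](bigD1 k') //=.
rewrite tpermL tpermR (eq_bigr (fun i : 'I_n => i * (t i).1)); last first.
  by move=> i /andP[ik' ik]; rewrite tpermD // eq_sym.
by rewrite k'k; lia.
Qed.

Definition column_pair (n : nat) (A : {set 'I_n}) (t : tab n) : Prop :=
  exists x y : 'I_n, [/\ x \in A, y \in A, x != y & (t x).2 = (t y).2].

Lemma tperm_sym_on (n : nat) (A : {set 'I_n}) (k k' : 'I_n) :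
  k \in A -> k' \in A -> tperm k k' \in sym_on A.
Proof.
move=> kA k'A; rewrite inE; apply: subset_trans (tperm_on k k') _.
by rewrite subUset !sub1set kA k'A.
Qed.

Lemma column_pair_perm (n : nat) (A : {set 'I_n}) (t : tab n) (s : {perm 'I_n}) :
  s \in sym_on A -> column_pair A t -> column_pair A (tab_perm t s).
Proof.
rewrite inE => /perm_onV sVA [x [y [xA yA xy txy]]].
exists (s^-1 x)%g, (s^-1 y)%g.
by rewrite !(perm_closed _ sVA) (inj_eq perm_inj) !ffunE !permKV.
Qed.

Lemma column_pair_ascent (n : nat) (la : seq nat) (A : {set 'I_n}) (t : tab n) :
  is_syt la t -> consecutive A -> column_pair A t ->
  exists k k' : 'I_n, [/\ val k' = k.+1, k \in A, k' \in A & (t k).1 < (t k').1].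
Proof.
case/and4P=> /injectiveP t_inj _ _ /forallP t_col A_cons [x0 [y0 [x0A y0A x0y0 col_x0y0]]].
have [x [y [xA yA lt_row col_xy]]] : exists x y : 'I_n,
    [/\ x \in A, y \in A, (t x).1 < (t y).1 & (t x).2 = (t y).2].
  case: (ltngtP (t x0).1 (t y0).1) => row_x0y0.
  - by exists x0, y0.
  - by exists y0, x0.
  - by case/eqP: x0y0; apply: t_inj; apply: injective_projections => //; apply: val_inj.
have lt_xy : x < y by have /forallP/(_ y) := t_col x; rewrite col_xy eqxx lt_row.
pose f m := oapp (fun i : 'I_n => (t i).1 : nat) 0 (insub m).
have fE (i : 'I_n) : f i = (t i).1 by rewrite /f valK.
have [k [le_xk lt_ky asc]] : exists k, [/\ x <= k, k < y & f k < f k.+1].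
  by apply: exists_ascent; rewrite ?fE // ltnW.
have lt_kn := ltn_trans lt_ky (ltn_ord y); have lt_k'n := leq_ltn_trans lt_ky (ltn_ord y).
exists (Ordinal lt_kn), (Ordinal lt_k'n); split=> //.
- by apply: (A_cons x _ y); rewrite //= ltnW.
- by apply: (A_cons x _ y); rewrite //= leqW.
- by move: asc; rewrite -[k]/(val (Ordinal lt_kn)) -[k.+1]/(val (Ordinal lt_k'n)) !fE.
Qed.

Local Open Scope ring_scope.

Section GroupSum.

Variables (R : pzRingType) (gT : finGroupType) (V : finType) (rho : gT -> V -> V -> R).
Hypothesis rhoM : forall (p q : gT) T U, rho (p * q)%g T U = \sum_W rho p T W * rho q W U.

Lemma rep_group_sum_invariant (G : {group gT}) (s : gT) (T U : V) : s \in G ->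
  \sum_W rho s T W * (\sum_(p in G) rho p W U) = \sum_(p in G) rho p T U.
Proof.
move=> sG; under eq_bigr do rewrite big_distrr.
rewrite exchange_big /=; under eq_bigr do rewrite -rhoM.
rewrite [RHS](reindex_inj (mulgI s)) /=.
by apply: eq_bigl => p; rewrite groupMl.
Qed.

End GroupSum.

Section YoungSymmetrizer.

Variables (R : rcfType) (n : nat) (la : seq nat).
Variable rho : {perm 'I_n} -> syt n la -> syt n la -> R.
Hypotheses (la_part : is_partition n la) (rho_yor : is_young_orthogonal_rep rho).
Variables (A : {set 'I_n}) (U : syt n la).
Hypothesis A_cons : consecutive A.

Let sym_sum (W : syt n la) := \sum_(p in sym_on A) rho p W U.

Lemma sym_sum_adjacent_eq0 (T : syt n la) (k k' : 'I_n) :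
    val k' = k.+1 -> k \in A -> k' \in A -> ((val T k).1 < (val T k').1)%N ->
    (forall W : syt n la, val W = tab_perm (val T) (tperm k k') -> sym_sum W = 0) ->
  sym_sum T = 0.
Proof.
move=> k'k kA k'A lt_row swap0; case: rho_yor => _ rhoM rho_adj.
have sA := tperm_sym_on kA k'A.
have := rep_group_sum_invariant rhoM (G := Sym_group A) T U sA.
change (\sum_W rho (tperm k k') T W * sym_sum W = sym_sum T -> sym_sum T = 0).
under eq_bigr do rewrite (rho_adj k k' k'k) /adj_coef /=.
set t := sval T; rewrite -[val T]/t in lt_row swap0.
have -> : ((t k).1 == (t k').1) = false by apply/negbTE; rewrite neq_ltn lt_row.
case: eqP => [same_col | diff_col].
  rewrite (bigD1 T) //= eqxx big1 => [|W /negPf ->]; last by rewrite mulr0n oppr0 mul0r.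
  by rewrite addr0 mulr1n mulN1r => E; lra.
have lt_col : ((t k').2 < (t k).2)%N.
  rewrite ltn_neqAle (syt_succ_below_col la_part (valP T) k'k lt_row) andbT.
  by apply/eqP => /val_inj E; apply: diff_col.
set a := (_%:~R^-1).
have a_lt0 : a < 0.
  by rewrite /a invr_lt0 ltrz0; move: lt_row lt_col; lia.
under eq_bigr do rewrite mulrDl.
rewrite big_split /= (bigD1 T) //= eqxx mulr1 big1 => [|W /negPf ->]; last by rewrite mulr0 mul0r.
rewrite [X in _ + X]big1 => [|W _]; last first.
  by case: eqP => [/swap0 -> | _]; rewrite ?mulr0 // mul0r.
by rewrite !addr0 => E; nra.
Qed.

Lemma sym_sum_column_pair_eq0 (T : syt n la) : column_pair A (val T) -> sym_sum T = 0.
Proof.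
have [N] := ubnP (row_weight (val T)); elim: N T => // N IHN T lt_wN cT.
have [k [k' [k'k kA k'A lt_row]]] := column_pair_ascent (valP T) A_cons cT.
apply: (sym_sum_adjacent_eq0 k'k kA k'A lt_row) => W WE.
apply: IHN; rewrite WE.
  by have := row_weight_tperm (val T) k'k; move: lt_wN lt_row; lia.
exact: column_pair_perm (tperm_sym_on kA k'A) cT.
Qed.

End YoungSymmetrizer.

Theorem lemma1 (R : rcfType) (n : nat) (la : seq nat)
    (rho : {perm 'I_n} -> syt n la -> syt n la -> R)
    (A : {set 'I_n}) (T : syt n la) :
  is_partition n la ->
  is_young_orthogonal_rep rho ->
  consecutive A ->
  (exists x y : 'I_n, [/\ x \in A, y \in A, x != y & ((val T) x).2 = ((val T) y).2]) ->
  forall U : syt n la, \sum_(p in sym_on A) rho p T U = 0.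
Proof.
by move=> la_part rho_yor A_cons cT U; apply: sym_sum_column_pair_eq0.
Qed.
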